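(* For every single-use two-way transducer there is $k\in\{1,2,\dots\}$ such that for every input $w$, the accepting run on $\vdash w\dashv$ (if it exists) has at most $k$ configurations whose head is at any given position.
   Context: Fix a countably infinite set $\mathbb A$ of atoms; polynomial orbit-finite sets are built from $\mathbb A$ and singletons by finite products and disjoint unions; equivariant means commuting with all bijections of $\mathbb A$. A two-way single-use transducer has polynomial orbit-finite alphabets $\Sigma,\Gamma$, finitely many states with initial $q_0$, finitely many registers with values in $\mathbb A+\bot$, and a deterministic transition function assigning to each state a question and, per answer, a next state and an action. Questions: an equivariant function $\Sigma+\{\vdash,\dashv\}\to\{\mathrm{yes},\mathrm{no}\}$ of the letter under the head; or equality of registers $r_1,r_2$ (reject if one is $\bot$), after which $r_1,r_2$ are set to $\bot$. Actions: store an equivariant function $\Sigma+\{\vdash,\dashv\}\to\mathbb A+\bot$ of the current letter in a register; append $f(r_1,\dots,r_k)$ to the output for equivariant $f:\mathbb A^k\to\Gamma$ and distinct registers, setting them to $\bot$ (reject if one is $\bot$); move the head left or right; accept or reject. A configuration consists of head position, state, register valuation and output so far; the run on $w$ starts on $\vdash$ of $\vdash w\dashv$ in $q_0$ with all registers $\bot$ and empty output; an accepting run is one ending with the accept action. *)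

From mathcomp Require Import all_boot.
Unset Printing Implicit Defensive.

(* Atoms: the countably infinite set nat.  A permutation of atoms is a
   bijection pi : nat -> nat (ssreflect's [bijective pi]). *)

(* Polynomial orbit-finite sets: syntax built from A, singletons (and the
   empty set = empty disjoint union) by finite products and disjoint unions. *)
Inductive pof := PEmpty | PUnit | PAtom | PProd of pof & pof | PSum of pof & pof.

Fixpoint pof_T (p : pof) : Type :=
  match p with
  | PEmpty => Empty_set
  | PUnit => unit
  | PAtom => nat
  | PProd a b => (pof_T a * pof_T b)%type
  | PSum a b => (pof_T a + pof_T b)%type
  end.

Fixpoint pof_act (p : pof) (pi : nat -> nat) : pof_T p -> pof_T p :=
  match p return pof_T p -> pof_T p with
  | PEmpty => fun x => x
  | PUnit => fun x => x
  | PAtom => pi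
  | PProd a b => fun x => (pof_act a pi x.1, pof_act b pi x.2)
  | PSum a b => fun x => match x with
                         | inl y => inl (pof_act a pi y)
                         | inr y => inr (pof_act b pi y)
                         end
  end.
Arguments pof_act : clear implicits.

Inductive letter (S : Type) := LMark | RMark | Sym of S.
Arguments LMark {S}. Arguments RMark {S}. Arguments Sym {S}.

Definition letter_act (p : pof) (pi : nat -> nat) (l : letter (pof_T p)) :
  letter (pof_T p) :=
  match l with
  | Sym a => Sym (pof_act p pi a)
  | LMark => LMark
  | RMark => RMark
  end.
Arguments letter_act {p}.

Definition eqv_test (S : pof) (f : letter (pof_T S) -> bool) : Prop :=
  forall pi, bijective pi -> forall l, f (letter_act pi l) = f l.
Definition eqv_load (S : pof) (g : letter (pof_T S) -> option nat) : Prop :=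
  forall pi, bijective pi -> forall l, g (letter_act pi l) = omap pi (g l).
(* A^k -> Gamma, with A^k represented by the lists of atoms of length k *)
Definition eqv_out (G : pof) (k : nat) (f : seq nat -> pof_T G) : Prop :=
  forall pi, bijective pi -> forall l, size l = k ->
    f (map pi l) = pof_act G pi (f l).
Arguments eqv_test {S}. Arguments eqv_load {S}. Arguments eqv_out {G}.

Set Implicit Arguments.
Section Transducer.
Variables (S G : pof) (Q R : finType).

Inductive question :=
  | QLetter of (letter (pof_T S) -> bool)
  | QEq of R & R.

Inductive action :=
  | AStore of (letter (pof_T S) -> option nat) & R
  | AOut of seq R & (seq nat -> pof_T G)
  | ALeft | ARight | AAccept | AReject.

Definition transition := Q -> question * (bool -> Q * action).

Definition wf_question (qu : question) : Prop :=
  match qu with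
  | QLetter f => eqv_test f
  | QEq _ _ => True
  end.

Definition wf_action (a : action) : Prop :=
  match a with
  | AStore g _ => eqv_load g
  | AOut rs f => uniq rs /\ eqv_out (size rs) f
  | _ => True
  end.

Definition wf_transition (delta : transition) : Prop :=
  forall q, wf_question (delta q).1 /\ forall b, wf_action ((delta q).2 b).2.

Record config := Config {
  pos : nat;
  state : Q;
  val : R -> option nat;
  out : seq (pof_T G) }.

Inductive outcome := Next of config | Acc | Rej.

(* Tape |- w -| : position 0 is |-, positions 1..size w are the letters of w,
   position size w + 1 is -|. *)
Definition tape (w : seq (pof_T S)) (i : nat) : letter (pof_T S) :=
  if i == 0 then LMark
  else match onth w i.-1 with Some a => Sym a | None => RMark end.

Definition upd (v : R -> option nat) (r : R) (x : option nat) : R -> option nat :=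
  fun r' => if r' == r then x else v r'.

Definition clear (v : R -> option nat) (rs : seq R) : R -> option nat :=
  fun r' => if r' \in rs then None else v r'.

Definition step (delta : transition) (w : seq (pof_T S)) (c : config) : outcome :=
  let (qu, tr) := delta (state c) in
  let ans : option (bool * (R -> option nat)) :=
    match qu with
    | QLetter f => Some (f (tape w (pos c)), val c)
    | QEq r1 r2 =>
        match val c r1, val c r2 with
        | Some a1, Some a2 =>
            Some (a1 == a2, upd (upd (val c) r1 None) r2 None)
        | _, _ => None
        end
    end in
  match ans with
  | None => Rej
  | Some (b, v) =>
      let (q', a) := tr b in
      match a with
      | AStore g r => Next (Config (pos c) q' (upd v r (g (tape w (pos c)))) (out c))
      | AOut rs f =>
          if all (fun r => v r != None) rs then
            Next (Config (pos c) q' (clear v rs)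
                    (rcons (out c) (f (map (fun r => odflt 0 (v r)) rs))))
          else Rej
      | ALeft => if pos c is p.+1 then Next (Config p q' v (out c)) else Rej
      | ARight => if pos c < size w + 1 then Next (Config (pos c).+1 q' v (out c))
                  else Rej
      | AAccept => Acc
      | AReject => Rej
      end
  end.

Definition init_config (q0 : Q) : config := Config 0 q0 (fun _ => None) [::].

Fixpoint run_from (delta : transition) (w : seq (pof_T S)) (c : config)
    (cs : seq config) : Prop :=
  match cs with
  | [::] => step delta w c = Acc
  | c' :: cs' => step delta w c = Next c' /\ run_from delta w c' cs'
  end.

Definition accepting_run (q0 : Q) (delta : transition) (w : seq (pof_T S))
    (run : seq config) : Prop :=
  exists cs, run = init_config q0 :: cs /\ run_from delta w (init_config q0) cs.

End Transducer.

From Pilot Require Import Defs.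
From mathcomp Require Import all_boot zify.
Set Implicit Arguments.
Unset Strict Implicit.

(* Fix an accepting run.  To every configuration c of it we attach a
   signature: its state, together with the sequence of answers to those
   register-equality questions in the remaining run that read a register
   whose content was already present in c (a "tracked" register).  Tracked
   registers are never refilled, and each such question consumes at least
   one of them (single use), so the answer sequence has length at most #|R|
   and there are finitely many signatures.

   The key lemma is a simulation argument: two configurations at the same
   position with the same signature behave identically, because every
   question they ask is answered equally (untracked registers hold equal
   values; tracked questions are answered as recorded), hence they are
   followed by runs of the same length.  Two configurations of a single run
   at the same position thus have different signatures, which bounds their
   number uniformly in the input. *)

Section SingleUseRuns.
Variables (S G : pof) (Q R : finType) (delta : transition S G Q R).
Variable w : seq (pof_T S).
Local Notation cfg := (config G Q R).
Local Notation valuation := (R -> option nat).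

Definition question_regs (qu : question S R) : {set R} :=
  if qu is QEq r1 r2 then [set r1; r2] else set0.

Definition action_regs (a : action S G R) : {set R} :=
  match a with AStore _ r => [set r] | AOut rs _ => [set r in rs] | _ => set0 end.

Definition answer (c : cfg) : bool :=
  match (delta (state c)).1 with
  | QLetter f => f (tape S w (pos c))
  | QEq r1 r2 => Defs.val c r1 == Defs.val c r2
  end.

Definition touched (c : cfg) : {set R} :=
  question_regs (delta (state c)).1 :|: action_regs ((delta (state c)).2 (answer c)).2.

Definition tests_tracked (I : {set R}) (c : cfg) : bool :=
  if (delta (state c)).1 is QEq r1 r2 then (r1 \in I) || (r2 \in I) else false.

Fixpoint tracked_answers (I : {set R}) (run : seq cfg) : seq bool :=
  if run is c :: run' then
    let rest := tracked_answers (I :\: touched c) run' in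
    if tests_tracked I c then answer c :: rest else rest
  else [::].

Definition agree (I : {set R}) (f g : valuation) : Prop :=
  forall r, r \notin I -> f r = g r.

Lemma agree_upd I f g r x :
  agree I f g -> agree (I :\: [set r]) (upd R f r x) (upd R g r x).
Proof.
move=> fg r'; rewrite /upd !inE negb_and negbK.
by case: (r' =P r) => //= _ /fg.
Qed.

Lemma agree_clear I f g rs :
  agree I f g -> agree (I :\: [set r in rs]) (clear R f rs) (clear R g rs).
Proof.
move=> fg r'; rewrite /clear !inE negb_and negbK.
by case: (r' \in rs) => //= /fg.
Qed.

Definition query (c : cfg) : option (bool * valuation) :=
  match (delta (state c)).1 with
  | QLetter f => Some (f (tape S w (pos c)), Defs.val c)
  | QEq r1 r2 =>
      match Defs.val c r1, Defs.val c r2 with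
      | Some a1, Some a2 =>
          Some (a1 == a2, upd R (upd R (Defs.val c) r1 None) r2 None)
      | _, _ => None
      end
  end.

Definition perform (p : nat) (q : Q) (a : action S G R) (v : valuation)
    (o : seq (pof_T G)) : outcome G Q R :=
  match a with
  | AStore g r => Next (Config G Q R p q (upd R v r (g (tape S w p))) o)
  | AOut rs f =>
      if all (fun r => v r != None) rs then
        Next (Config G Q R p q (clear R v rs) (rcons o (f (map (fun r => odflt 0 (v r)) rs))))
      else Rej G Q R
  | ALeft => if p is p'.+1 then Next (Config G Q R p' q v o) else Rej G Q R
  | ARight => if p < size w + 1 then Next (Config G Q R p.+1 q v o) else Rej G Q R
  | AAccept => Acc G Q R
  | AReject => Rej G Q R
  end.

Lemma stepE (c : cfg) :
  step delta w c =
  if query c is Some (b, v) then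
    perform (pos c) ((delta (state c)).2 b).1 ((delta (state c)).2 b).2 v (out c)
  else Rej G Q R.
Proof.
rewrite /step /query; case: (delta (state c)) => [[f|r1 r2] tr] /=.
  by case: (tr _).
by case: (Defs.val c r1) => [a1|]; case: (Defs.val c r2) => [a2|] //; case: (tr _).
Qed.

Lemma query_answer c b v : query c = Some (b, v) -> b = answer c.
Proof.
rewrite /query /answer; case: (delta (state c)).1 => [f [<-]|r1 r2] //.
by case: (Defs.val c r1) => [a1|]; case: (Defs.val c r2) => [a2|] // [<-].
Qed.

Lemma query_agree I c d b v b' v' :
  state c = state d -> agree I (Defs.val c) (Defs.val d) ->
  query c = Some (b, v) -> query d = Some (b', v') ->
  agree (I :\: question_regs (delta (state c)).1) v v'.
Proof.
rewrite /query => <- cd; case: (delta (state c)).1 => [f [_ <-] [_ <-]|r1 r2].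
  by move=> r; rewrite setD0; apply: cd.
case: (Defs.val c r1) => [?|] //; case: (Defs.val c r2) => [?|] // [_ <-].
case: (Defs.val d r1) => [?|] //; case: (Defs.val d r2) => [?|] // [_ <-].
by rewrite /= -setDDl; apply/agree_upd/agree_upd.
Qed.

Lemma perform_sim J p q a v v' o o' :
  agree J v v' ->
  perform p q a v o <> Rej G Q R -> perform p q a v' o' <> Rej G Q R ->
  (perform p q a v o = Acc G Q R /\ perform p q a v' o' = Acc G Q R) \/
  exists c' d', [/\ perform p q a v o = Next c', perform p q a v' o' = Next d',
    pos c' = pos d', state c' = state d' &
    agree (J :\: action_regs a) (Defs.val c') (Defs.val d')].
Proof.
move=> vv'; rewrite /perform.
have vv'0 : agree (J :\: set0) v v' by rewrite setD0.
case: a => [g r|rs f| | | |] /=; try by [left | right; do 2 eexists].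
- by right; do 2 eexists; split => //; apply: agree_upd.
- by case: ifP; case: ifP => // _ _ _ _; right; do 2 eexists; split => //; apply: agree_clear.
- by case: p => [|p] //= _ _; right; do 2 eexists.
- by case: ifP => // _ _ _; right; do 2 eexists.
Qed.

Lemma step_sim I (c d : cfg) :
  pos c = pos d -> state c = state d -> agree I (Defs.val c) (Defs.val d) ->
  answer c = answer d ->
  step delta w c <> Rej G Q R -> step delta w d <> Rej G Q R ->
  (step delta w c = Acc G Q R /\ step delta w d = Acc G Q R) \/
  exists c' d', [/\ step delta w c = Next c', step delta w d = Next d',
    pos c' = pos d', state c' = state d' &
    agree (I :\: touched c) (Defs.val c') (Defs.val d')].
Proof.
move=> pcd scd cd acd; rewrite !stepE.
case qc: (query c) => [[b v]|] //; case qd: (query d) => [[b' v']|] //.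
have vv' := query_agree scd cd qc qd.
rewrite (query_answer qc) (query_answer qd) -acd -pcd -scd /touched -setDDl.
exact: perform_sim.
Qed.

Lemma answer_untracked I (c d : cfg) :
  pos c = pos d -> state c = state d -> agree I (Defs.val c) (Defs.val d) ->
  ~~ tests_tracked I c -> answer c = answer d.
Proof.
rewrite /answer /tests_tracked => -> <- cd; case: (delta (state c)).1 => //= r1 r2.
by rewrite negb_or => /andP[/cd -> /cd ->].
Qed.

Lemma tracked_answers_cons I (c d : cfg) cs ds :
  pos c = pos d -> state c = state d -> agree I (Defs.val c) (Defs.val d) ->
  tracked_answers I (c :: cs) = tracked_answers I (d :: ds) ->
  answer c = answer d /\
  tracked_answers (I :\: touched c) cs = tracked_answers (I :\: touched c) ds.
Proof.
move=> pcd scd cd /=.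
have -> : tests_tracked I d = tests_tracked I c by rewrite /tests_tracked scd.
have touched_cd : answer c = answer d -> touched d = touched c.
  by rewrite /touched scd => ->.
case: ifP => [_ [acd]|/negbT untracked].
  by rewrite (touched_cd acd).
have acd := answer_untracked pcd scd cd untracked.
by rewrite (touched_cd acd).
Qed.

Lemma run_from_not_rej c cs : run_from delta w c cs -> step delta w c <> Rej G Q R.
Proof. by case: cs => [|c1 cs] /= => [->|[->]]. Qed.

Lemma same_signature_same_length I (c d : cfg) cs ds :
  run_from delta w c cs -> run_from delta w d ds ->
  pos c = pos d -> state c = state d -> agree I (Defs.val c) (Defs.val d) ->
  tracked_answers I (c :: cs) = tracked_answers I (d :: ds) ->
  size cs = size ds.
Proof.
elim: cs ds I c d => [|c1 cs IH] [|d1 ds] I c d runc rund pcd scd cd eq_ans //;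
  have [acd eq_rest] := tracked_answers_cons pcd scd cd eq_ans;
  have [[accc accd]|[c' [d' [nextc nextd pcd' scd' cd']]]] :=
    step_sim pcd scd cd acd (run_from_not_rej runc) (run_from_not_rej rund).
- by move: rund => /= []; rewrite accd.
- by move: runc; rewrite /= nextc.
- by move: runc => /= []; rewrite accc.
- by move: rund; rewrite /= nextd.
- by move: runc; rewrite /= accc => -[].
- move: runc rund => /= [] + runc [] + rund; rewrite nextc nextd => -[eq_c1] [eq_d1]; subst c1 d1.
  by rewrite (IH ds _ c' d' runc rund pcd' scd' cd' eq_rest).
Qed.

(* Single use: a tracked question consumes a tracked register. *)
Lemma tracked_test_consumes I (c : cfg) :
  tests_tracked I c -> I :\: touched c \proper I.
Proof.
rewrite /tests_tracked /touched => tracked; apply/properP; split; first exact: subsetDl.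
move: tracked; case: (delta (state c)).1 => // r1 r2 /orP[] r_in;
  [exists r1 | exists r2] => //; by rewrite !inE r_in eqxx ?orbT.
Qed.

Lemma tracked_answers_size I run : size (tracked_answers I run) <= #|I|.
Proof.
elim: run I => [|c run IH] I //=.
have sub : #|I :\: touched c| <= #|I| by apply/subset_leq_card/subsetDl.
case: ifP => [/tracked_test_consumes/proper_card lt|_] /=.
  exact: leq_ltn_trans (IH _) lt.
exact: leq_trans (IH _) sub.
Qed.

Lemma run_from_drop c cs i :
  run_from delta w c cs -> i <= size cs ->
  run_from delta w (nth c (c :: cs) i) (drop i.+1 (c :: cs)).
Proof.
elim: cs c i => [|c1 cs IH] c [|i] //= [_ runc1] lei.
by rewrite (set_nth_default c1 c) //; apply: IH.
Qed.

(* Distinct configurations of one accepting run at the same position differ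
   in state or in tracked answers of the remaining run, since the remaining
   runs have different lengths. *)
Lemma signature_inj c cs i j :
  run_from delta w c cs -> i < size (c :: cs) -> j < size (c :: cs) ->
  pos (nth c (c :: cs) i) = pos (nth c (c :: cs) j) ->
  state (nth c (c :: cs) i) = state (nth c (c :: cs) j) ->
  tracked_answers setT (drop i (c :: cs)) = tracked_answers setT (drop j (c :: cs)) ->
  i = j.
Proof.
move=> runc lt_i lt_j pij sij; rewrite (drop_nth c lt_i) (drop_nth c lt_j) => eq_ans.
have [le_i le_j] : i <= size cs /\ j <= size cs by [].
have agreeT : agree setT (Defs.val (nth c (c :: cs) i)) (Defs.val (nth c (c :: cs) j)).
  by move=> r; rewrite inE.
have := same_signature_same_length (run_from_drop runc le_i) (run_from_drop runc le_j)
  pij sij agreeT eq_ans.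
rewrite !size_drop /=; lia.
Qed.

End SingleUseRuns.

Fixpoint bit_strings (n : nat) : seq (seq bool) :=
  if n is n'.+1 then [::] :: [seq b :: s | b <- [:: true; false], s <- bit_strings n']
  else [:: [::]].

Lemma bit_strings_complete n s : size s <= n -> s \in bit_strings n.
Proof.
elim: n s => [|n IH] [|b s] //= le_sn.
rewrite inE !mem_cat; apply/orP; right.
by case: b; [apply/orP; left | apply/orP; right; apply/orP; left];
  apply: map_f; apply: IH.
Qed.

Theorem mainTheorem18 (S G : pof) (Q R : finType) (q0 : Q)
    (delta : transition S G Q R) (Hwf : wf_transition delta) :
  exists k : nat, 0 < k /\
    forall (w : seq (pof_T S)) (run : seq (config G Q R)),
      accepting_run q0 delta w run ->
      forall p : nat, count (fun c => pos c == p) run <= k.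
Proof.
set signatures := [seq (q, s) | q <- enum Q, s <- bit_strings #|R|].
exists (size signatures).+1; split => // w run [cs [-> runc]] p.
set c0 := init_config G Q R q0; set L := c0 :: cs.
pose signature i := (state (nth c0 L i), tracked_answers delta w setT (drop i L)).
pose at_p := [seq i <- iota 0 (size L) | pos (nth c0 L i) == p].
have -> : count (fun c => pos c == p) L = size at_p.
  by rewrite /at_p -{1}(mkseq_nth c0 L) /mkseq count_map size_filter.
apply: leqW; rewrite -(size_map signature); apply: uniq_leq_size.
- rewrite map_inj_in_uniq ?filter_uniq ?iota_uniq // => i j.
  rewrite !mem_filter !mem_iota !add0n => /andP[/eqP pi lt_i] /andP[/eqP pj lt_j] [].
  by apply: (signature_inj runc); rewrite ?pi ?pj.
- move=> _ /mapP[i _ ->]; apply: allpairs_f; first by rewrite mem_enum.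
  by apply: bit_strings_complete; rewrite -cardsT tracked_answers_size.
Qed.
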